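(* Let $\varphi$ be a normal form $\mathrm{GF}^2$-sentence with special guards, let $S$ be a special relation symbol of $\sigma_\varphi$, and let $\theta$ be a $\varphi^{S}_{\mathrm{sym}}$-admissible counting type. Then: (i) if $\varphi$ does not use equality and $\theta'$ is a counting type extending $\theta$, then $\theta'$ is $\varphi^{S}_{\mathrm{sym}}$-admissible; (ii) if $\theta'$ is a counting type safely extending $\theta$, then $\theta'$ is $\varphi^{S}_{\mathrm{sym}}$-admissible; (iii) if $\theta'$ is the cutting of $\theta$ to $M_\varphi$, then $\theta'$ (viewed as an exact counting type) is $\varphi^{S}_{\mathrm{sym}}$-admissible.
   Context: Formulas use only variables $x,y$; $\mathrm{GF}^2$ is the two-variable guarded fragment (quantifiers relativised by atomic guards containing all free variables; equality allowed in guards). In $\mathrm{GF}^2$ with special guards, certain binary ''special'' symbols may occur only in guards and are required to have a fixed property (e.g. transitive, reflexive-transitive, equivalence); a structure is special if the special symbols satisfy the requirement. $\sigma_\varphi$ is the set of relation symbols in $\varphi$, $|\varphi|$ its length. A normalized special guard is one of $Sxy\wedge Syx$, $Sxy\wedge\neg Syx$, $Syx\wedge\neg Sxy$ for a special $S$. $\varphi$ is in normal form if it is a conjunction of formulas of the forms: $\exists x(p(x)\wedge\psi(x))$; $\forall x\forall y(\eta(x,y)\rightarrow\psi(x,y))$; $\forall x(S_ixx\rightarrow\psi(x))$; $\forall x\forall y(q(x,y)\rightarrow\psi(x,y))$; $\forall x(q(x)\rightarrow\psi(x))$; $\forall x(p(x)\rightarrow\exists y(\eta(x,y)\wedge\psi(x,y)))$;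 $\forall x(p(x)\rightarrow\exists y(q(x,y)\wedge\psi(x,y)))$, where $p$ is atomic, $q(x),q(x,y)$ are atoms without special symbols, $\eta$ is a normalized special guard and $\psi$ is quantifier-free without special symbols. $\varphi_\forall$ is the conjunction of the conjuncts of the second through fifth forms; $\varphi^{S}_{\mathrm{sym}}$ is $\varphi_\forall$ conjoined with all conjuncts $\forall x(p(x)\rightarrow\exists y(Sxy\wedge Syx\wedge\psi(x,y)))$. An atomic 1-type over $\sigma_\varphi$ is a maximal consistent set of atomic and negated atomic formulas in the variable $x$; $\mathcal{A}_\varphi$ is the set of all of them. A counting type is a function $\theta:\mathcal{A}_\varphi\to\mathbb{N}$ not everywhere zero; an $n$-counting type is a function $\mathcal{A}_\varphi\to\{0,\dots,n\}$. The cutting of $\theta$ to $n$ is $\alpha\mapsto\min(\theta(\alpha),n)$. $\theta'$ extends $\theta$ if for all $\alpha$: $\theta'(\alpha)\ge\theta(\alpha)$ when $\theta(\alpha)>0$, and $\theta'(\alpha)=0$ when $\theta(\alpha)=0$; it safely extends $\theta$ if additionally $\theta'(\alpha)=\theta(\alpha)$ whenever $\theta(\alpha)=1$. For a binary symbol $S$, an $S$-class is a (special) structure $\mathfrak{C}$ such that $\mathfrak{C}\models Sab\wedge Sba$ for all $a,b$ in its domain; a finite $\mathfrak{C}$ has counting type $\theta$ if each $\alpha$ is realized exactly $\theta(\alpha)$ times in $\mathfrak{C}$. A counting type (or an $n$-counting type viewed as a counting type) is $\varphi^{S}_{\mathrm{sym}}$-admissible if some $S$-class of that counting type satisfies $\varphi^{S}_{\mathrm{sym}}$.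 Finally $M_\varphi=3|\mathcal{A}_\varphi|\,|\varphi|^3$. *)

From mathcomp Require Import all_boot.
Set Implicit Arguments. Unset Strict Implicit. Unset Printing Implicit Defensive.

(** Relation symbols are natural numbers; unary symbols and binary symbols
    live in separate name spaces. *)

Inductive var := vx | vy.

Inductive atom :=
| AU  (P : nat) (v : var)
| AB  (R : nat) (v w : var)
| AEq (v w : var).

Inductive form :=
| FTrue
| FAtom (a : atom)
| FNeg (f : form)
| FAnd (f g : form)
| FOr  (f g : form)
| FImp (f g : form)
| FEx  (v : var) (f : form)
| FAll (v : var) (f : form).

(** length |phi|: every symbol occurrence counts 1 *)
Definition alen (a : atom) : nat :=
  match a with AU _ _ => 2 | AB _ _ _ => 3 | AEq _ _ => 3 end.

Fixpoint flen (f : form) : nat :=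
  match f with
  | FTrue => 1
  | FAtom a => alen a
  | FNeg f => (flen f).+1
  | FAnd f g | FOr f g | FImp f g => (flen f + flen g).+1
  | FEx _ f | FAll _ f => (flen f).+2
  end.

Definition atom_vars (a : atom) : seq var :=
  match a with AU _ v => [:: v] | AB _ v w => [:: v; w] | AEq v w => [:: v; w] end.

Definition var_eqb (v w : var) : bool :=
  match v, w with vx, vx | vy, vy => true | _, _ => false end.

Definition atom_has_var (v : var) (a : atom) : bool := has (var_eqb v) (atom_vars a).

Fixpoint form_atoms (f : form) : seq atom :=
  match f with
  | FTrue => [::]
  | FAtom a => [:: a]
  | FNeg f | FEx _ f | FAll _ f => form_atoms f
  | FAnd f g | FOr f g | FImp f g => form_atoms f ++ form_atoms g
  end.

Fixpoint qfree (f : form) : bool :=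
  match f with
  | FTrue | FAtom _ => true
  | FNeg f => qfree f
  | FAnd f g | FOr f g | FImp f g => qfree f && qfree g
  | FEx _ _ | FAll _ _ => false
  end.

Definition atom_usyms (a : atom) : seq nat := if a is AU P _ then [:: P] else [::].
Definition atom_bsyms (a : atom) : seq nat := if a is AB R _ _ then [:: R] else [::].
Definition atom_is_eq (a : atom) : bool := if a is AEq _ _ then true else false.

(** * Special symbols: each binary symbol b with [spec b = Some k] is special
    and is required to have property k. *)
Inductive skind := KTrans | KReflTrans | KEquiv.

Definition is_special (spec : nat -> option skind) (b : nat) : bool :=
  if spec b is Some _ then true else false.

Definition atom_nospec spec (a : atom) : bool :=
  all (fun b => ~~ is_special spec b) (atom_bsyms a).

Definition form_nospec spec (f : form) : bool := all (atom_nospec spec) (form_atoms f).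

Definition atom_only_x (a : atom) : bool := ~~ atom_has_var vy a.
Definition form_only_x (f : form) : bool := all atom_only_x (form_atoms f).

Inductive sguard := GSym (Sy : nat) | GFwd (Sy : nat) | GBwd (Sy : nat).

Definition sguard_sym (g : sguard) : nat :=
  match g with GSym Sy | GFwd Sy | GBwd Sy => Sy end.

Definition sguard_form (g : sguard) : form :=
  match g with
  | GSym Sy => FAnd (FAtom (AB Sy vx vy)) (FAtom (AB Sy vy vx))
  | GFwd Sy => FAnd (FAtom (AB Sy vx vy)) (FNeg (FAtom (AB Sy vy vx)))
  | GBwd Sy => FAnd (FAtom (AB Sy vy vx)) (FNeg (FAtom (AB Sy vx vy)))
  end.

Inductive nf :=
| NExists   (p : atom) (psi : form)
| NAllSpec  (eta : sguard) (psi : form)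
| NAllRefl  (Sy : nat) (psi : form)
| NAll2     (q : atom) (psi : form)
| NAll1     (q : atom) (psi : form)
| NAllExSpec (p : atom) (eta : sguard) (psi : form)
| NAllExQ   (p : atom) (q : atom) (psi : form).

Definition nf_form (c : nf) : form :=
  match c with
  | NExists p psi => FEx vx (FAnd (FAtom p) psi)
  | NAllSpec eta psi => FAll vx (FAll vy (FImp (sguard_form eta) psi))
  | NAllRefl Sy psi => FAll vx (FImp (FAtom (AB Sy vx vx)) psi)
  | NAll2 q psi => FAll vx (FAll vy (FImp (FAtom q) psi))
  | NAll1 q psi => FAll vx (FImp (FAtom q) psi)
  | NAllExSpec p eta psi =>
      FAll vx (FImp (FAtom p) (FEx vy (FAnd (sguard_form eta) psi)))
  | NAllExQ p q psi =>
      FAll vx (FImp (FAtom p) (FEx vy (FAnd (FAtom q) psi)))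
  end.

Fixpoint conj_form (cs : seq nf) : form :=
  match cs with
  | [::] => FTrue
  | [:: c] => nf_form c
  | c :: cs' => FAnd (nf_form c) (conj_form cs')
  end.

Definition good_psi spec (psi : form) : bool := qfree psi && form_nospec spec psi.
Definition good_psi1 spec (psi : form) : bool := good_psi spec psi && form_only_x psi.
Definition good_q2 spec (q : atom) : bool :=
  atom_nospec spec q && atom_has_var vx q && atom_has_var vy q.
Definition good_q1 spec (q : atom) : bool := atom_nospec spec q && atom_only_x q.
Definition good_p (p : atom) : bool := atom_only_x p.

Definition nf_ok spec (c : nf) : bool :=
  match c with
  | NExists p psi => good_p p && good_psi1 spec psi
  | NAllSpec eta psi => is_special spec (sguard_sym eta) && good_psi spec psi
  | NAllRefl Sy psi => is_special spec Sy && good_psi1 spec psi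
  | NAll2 q psi => good_q2 spec q && good_psi spec psi
  | NAll1 q psi => good_q1 spec q && good_psi1 spec psi
  | NAllExSpec p eta psi =>
      [&& good_p p, is_special spec (sguard_sym eta) & good_psi spec psi]
  | NAllExQ p q psi => [&& good_p p, good_q2 spec q & good_psi spec psi]
  end.

Definition normal_form spec (phi : seq nf) : bool := all (nf_ok spec) phi.

Definition phi_len (phi : seq nf) : nat := flen (conj_form phi).
Definition usyms (phi : seq nf) : seq nat :=
  undup (flatten (map atom_usyms (form_atoms (conj_form phi)))).
Definition bsyms (phi : seq nf) : seq nat :=
  undup (flatten (map atom_bsyms (form_atoms (conj_form phi)))).
Definition uses_eq (phi : seq nf) : bool := has atom_is_eq (form_atoms (conj_form phi)).

Definition in_sym (Sy : nat) (c : nf) : bool :=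
  match c with
  | NAllSpec _ _ | NAllRefl _ _ | NAll2 _ _ | NAll1 _ _ => true
  | NAllExSpec _ (GSym Sy') _ => Sy' == Sy
  | _ => false
  end.
Definition phi_sym (Sy : nat) (phi : seq nf) : seq nf := filter (in_sym Sy) phi.

Record structure (D : Type) := Structure {
  uint : nat -> D -> bool;
  bint : nat -> D -> D -> bool }.

Definition upd D (e : var -> D) (v : var) (d : D) : var -> D :=
  fun w => if var_eqb v w then d else e w.

Definition eval_atom D (M : structure D) (e : var -> D) (a : atom) : Prop :=
  match a with
  | AU P v => uint M P (e v)
  | AB R v w => bint M R (e v) (e w)
  | AEq v w => e v = e w
  end.

Fixpoint eval D (M : structure D) (e : var -> D) (f : form) : Prop :=
  match f with
  | FTrue => True
  | FAtom a => eval_atom M e a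
  | FNeg f => ~ eval M e f
  | FAnd f g => eval M e f /\ eval M e g
  | FOr f g => eval M e f \/ eval M e g
  | FImp f g => eval M e f -> eval M e g
  | FEx v f => exists d, eval M (upd e v d) f
  | FAll v f => forall d, eval M (upd e v d) f
  end.

Definition models D (M : structure D) (f : form) : Prop := forall e, eval M e f.

Definition kind_holds D (k : skind) (r : D -> D -> bool) : Prop :=
  match k with
  | KTrans => transitive r
  | KReflTrans => reflexive r /\ transitive r
  | KEquiv => [/\ reflexive r, symmetric r & transitive r]
  end.

Definition special_structure spec D (M : structure D) : Prop :=
  forall b k, spec b = Some k -> kind_holds k (bint M b).

Definition S_class D (M : structure D) (Sy : nat) : Prop :=
  forall a b, bint M Sy a b /\ bint M Sy b a.

(** * Atomic 1-types over sigma_phi: a truth value for every atom P x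
    (P unary in sigma_phi) and R x x (R binary in sigma_phi);
    x = x is always true. *)
Definition atype (phi : seq nf) : finType :=
  ({ffun seq_sub (usyms phi) -> bool} * {ffun seq_sub (bsyms phi) -> bool})%type.

Definition type_of (phi : seq nf) D (M : structure D) (a : D) : atype phi :=
  ([ffun u => uint M (val u) a], [ffun b => bint M (val b) a a]).

Definition counting_type (phi : seq nf) (theta : atype phi -> nat) : Prop :=
  exists alpha, theta alpha != 0.

Definition has_counting_type (phi : seq nf) (D : finType) (M : structure D)
  (theta : atype phi -> nat) : Prop :=
  forall alpha, #|[pred a : D | type_of phi M a == alpha]| = theta alpha.

Definition sym_admissible spec (phi : seq nf) (Sy : nat) (theta : atype phi -> nat) : Prop :=
  exists (D : finType) (M : structure D),
    [/\ special_structure spec M, S_class M Sy, has_counting_type M theta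
      & models M (conj_form (phi_sym Sy phi))].

Definition extends (phi : seq nf) (theta theta' : atype phi -> nat) : Prop :=
  forall alpha, (0 < theta alpha -> theta alpha <= theta' alpha) /\
                (theta alpha = 0 -> theta' alpha = 0).

Definition safely_extends (phi : seq nf) (theta theta' : atype phi -> nat) : Prop :=
  extends theta theta' /\ forall alpha, theta alpha = 1 -> theta' alpha = 1.

Definition cutting (phi : seq nf) (theta : atype phi -> nat) (n : nat) : atype phi -> nat :=
  fun alpha => minn (theta alpha) n.

Definition M_phi (phi : seq nf) : nat := 3 * #|{: atype phi}| * (phi_len phi) ^ 3.

From mathcomp Require Import all_boot zify.
From Stdlib Require Import Classical.
From HB Require Import structures.
Set Implicit Arguments. Unset Strict Implicit. Unset Printing Implicit Defensive.

(* An S-class M satisfying phi^S_sym can be re-assembled over a new finite domain from a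
   map f into M and, for x <> y, a pair g x y of elements of M of the types of f x and f y:
   S becomes the full relation, the other special symbols live on the diagonal only, and
   every other atom on x, y is read off g x y.  The conjuncts of phi^S_sym only constrain
   1-types, 2-types and S-symmetric witnesses, so the result is again a model provided g is
   symmetric, keeps x and y apart when phi has equality, and every witness needed in M is
   found along g.
   To extend a counting type, add copies of one element of each type; two copies of one
   element copy a pair of distinct elements of that type, which exists when phi has equality
   since a safe extension never copies a type realised once.
   To cut it down, keep every element of a type realised fewer than 3m times (m the number
   of conjuncts) together with its witnesses, and M_phi elements of every other type.  The
   kept elements of a frequent type form three groups of m slots; an element of group j
   whose witness has a frequent type takes instead the element in slot c of group j + 1
   (mod 3) of that type, c being the conjunct, so no pair is redirected both ways. *)

Definition var_eq_dec (v w : var) : {v = w} + {v <> w}.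
Proof. decide equality. Defined.

Definition atom_eq_dec (a b : atom) : {a = b} + {a <> b}.
Proof. decide equality; solve [exact: var_eq_dec | exact: PeanoNat.Nat.eq_dec]. Defined.

Definition form_eq_dec (f g : form) : {f = g} + {f <> g}.
Proof. decide equality; solve [exact: var_eq_dec | exact: atom_eq_dec]. Defined.

Definition sguard_eq_dec (eta eta' : sguard) : {eta = eta'} + {eta <> eta'}.
Proof. decide equality; exact: PeanoNat.Nat.eq_dec. Defined.

Definition nf_eq_dec (c c' : nf) : {c = c'} + {c <> c'}.
Proof.
decide equality;
  solve [exact: atom_eq_dec | exact: form_eq_dec | exact: sguard_eq_dec
        | exact: PeanoNat.Nat.eq_dec].
Defined.

HB.instance Definition _ := hasDecEq.Build atom (compareP atom_eq_dec).
HB.instance Definition _ := hasDecEq.Build nf (compareP nf_eq_dec).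

Definition env2 D (a b : D) (v : var) : D := if v is vx then a else b.

Section Evaluation.
Variables (D : Type) (M : structure D).

Lemma eval_ext (f : form) e1 e2 : e1 =1 e2 -> eval M e1 f <-> eval M e2 f.
Proof.
elim: f e1 e2 => [|a|f IH|f IHf g IHg|f IHf g IHg|f IHf g IHg|v f IH|v f IH] e1 e2 E /=.
- by [].
- by case: a => [P w|R w w'|w w'] /=; rewrite ?E.
- by have := IH _ _ E; tauto.
1-3: by have := IHf _ _ E; have := IHg _ _ E; tauto.
all: have Eu d : upd e1 v d =1 upd e2 v d by move=> w; rewrite /upd E.
- by split=> -[d Hd]; exists d; apply/(IH _ _ (Eu d)).
- by split=> Hd d; apply/(IH _ _ (Eu d)).
Qed.

Lemma models_all2 F : models M (FAll vx (FAll vy F)) <-> forall a b, eval M (env2 a b) F.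
Proof.
by split=> H => [a b|e a b]; [have := H (env2 a b) a b | have := H a b];
  apply: iffLR; apply: eval_ext; case.
Qed.

Lemma models_all1 F : models M (FAll vx F) <-> forall a b, eval M (env2 a b) F.
Proof.
by split=> H => [a b|e a]; [have := H (env2 a b) a | have := H a (e vy)];
  apply: iffLR; apply: eval_ext; case.
Qed.

Lemma models_all1_imp F G : models M (FAll vx (FImp F G)) <->
  forall a b, eval M (env2 a b) F -> eval M (env2 a b) G.
Proof. exact: models_all1. Qed.

Lemma eval_ex_y F a b : eval M (env2 a b) (FEx vy F) <-> exists w, eval M (env2 a w) F.
Proof. by split=> -[w Hw]; exists w; move: Hw; apply: iffLR; apply: eval_ext; case. Qed.

Lemma models_conj_form cs :
  models M (conj_form cs) <-> forall c, c \in cs -> models M (nf_form c).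
Proof.
elim: cs => [|c cs IH] /=; first by split.
case: cs IH => [|c' cs] IH.
  by split=> [Mc c0 /[!inE] /eqP -> | ]; last by apply; rewrite inE.
split=> [Mcs c0 /[!inE] /orP [/eqP -> e | c0_cs] | Mcs e].
- by case: (Mcs e).
- by apply: (IH.1 _ c0 c0_cs) => e; case: (Mcs e).
- split; first by apply: Mcs; rewrite inE eqxx.
  by apply: IH.2 e => c0 c0_cs; apply: Mcs; rewrite inE c0_cs orbT.
Qed.

End Evaluation.

Lemma qfree_eval_iff D1 D2 (M1 : structure D1) (M2 : structure D2) e1 e2 f :
  qfree f -> {in form_atoms f, forall a, eval_atom M1 e1 a <-> eval_atom M2 e2 a} ->
  eval M1 e1 f <-> eval M2 e2 f.
Proof.
elim: f => [|a|f IH|f IHf g IHg|f IHf g IHg|f IHf g IHg|v f IH|v f IH] //= qf E.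
- by apply: E; rewrite inE.
- by have := IH qf E; tauto.
all: case/andP: qf => qf qg.
all: have Ef : {in form_atoms f, forall a, eval_atom M1 e1 a <-> eval_atom M2 e2 a}
       by move=> a a_f; apply: E; rewrite mem_cat a_f.
all: have Eg : {in form_atoms g, forall a, eval_atom M1 e1 a <-> eval_atom M2 e2 a}
       by move=> a a_g; apply: E; rewrite mem_cat a_g orbT.
all: by have := IHf qf Ef; have := IHg qg Eg; tauto.
Qed.

Lemma eval_only_x D (M : structure D) psi x y y' :
  qfree psi -> form_only_x psi -> eval M (env2 x y) psi <-> eval M (env2 x y') psi.
Proof.
move=> qf /allP only_x; apply: qfree_eval_iff => // a /only_x.
by case: a => [? []|? [] []|[] []].
Qed.

Lemma conj_form_atoms (cs : seq nf) c :
  c \in cs -> {subset form_atoms (nf_form c) <= form_atoms (conj_form cs)}.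
Proof.
elim: cs => [|c0 cs IH] //; rewrite inE => /orP [/eqP <- | c_cs] a a_c.
- by case: cs IH => [|c' cs] IH //=; rewrite mem_cat a_c.
- by case: cs IH c_cs => [|c' cs] IH c_cs //=; rewrite mem_cat (IH c_cs a a_c) orbT.
Qed.

Section Signature.
Variable phi : seq nf.

Lemma mem_usyms P v : AU P v \in form_atoms (conj_form phi) -> P \in usyms phi.
Proof. by move=> a_phi; rewrite mem_undup; apply/flatten_mapP; exists (AU P v); rewrite ?inE. Qed.

Lemma mem_bsyms R v w : AB R v w \in form_atoms (conj_form phi) -> R \in bsyms phi.
Proof.
by move=> a_phi; rewrite mem_undup; apply/flatten_mapP; exists (AB R v w); rewrite ?inE.
Qed.

Lemma uses_eq_atom v w : AEq v w \in form_atoms (conj_form phi) -> uses_eq phi.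
Proof. by move=> a_phi; apply/hasP; exists (AEq v w). Qed.

Variables (D : Type) (M : structure D) (a b : D).
Hypothesis ab : type_of phi M a = type_of phi M b.

Lemma type_of_uint P : P \in usyms phi -> uint M P a = uint M P b.
Proof. by move=> P_phi; move/(congr1 fst)/ffunP/(_ (SeqSub P_phi)): ab; rewrite !ffunE. Qed.

Lemma type_of_bint R : R \in bsyms phi -> bint M R a a = bint M R b b.
Proof. by move=> R_phi; move/(congr1 snd)/ffunP/(_ (SeqSub R_phi)): ab; rewrite !ffunE. Qed.

End Signature.

(** * Glueing a model over a new domain *)

Lemma kind_holds_true D k : kind_holds k (fun _ _ : D => true).
Proof. by case: k. Qed.

Lemma kind_holds_diag (D D' : eqType) (f : D' -> D) k (r : D -> D -> bool) :
  kind_holds k r -> kind_holds k (fun x y => (x == y) && r (f x) (f x)).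
Proof.
have trans : transitive (fun x y => (x == y) && r (f x) (f x)).
  by move=> y x z /andP [/eqP -> _] /andP [/eqP -> ->]; rewrite eqxx.
case: k => //= [[refl _] | [refl _ _]]; first by split=> // x; rewrite eqxx refl.
by split=> [x | x y |]; rewrite ?eqxx ?refl // eq_sym.
Qed.

Section Glue.
Variables (spec : nat -> option skind) (phi : seq nf) (Sy : nat).
Hypothesis phi_nf : normal_form spec phi.
Variables (D D' : finType) (M : structure D).
Hypothesis M_special : special_structure spec M.
Hypothesis M_class : S_class M Sy.
Hypothesis M_models : models M (conj_form (phi_sym Sy phi)).
Variables (f : D' -> D) (g : D' -> D' -> D * D).
Hypothesis g_type : forall x y, x != y ->
  type_of phi M (g x y).1 = type_of phi M (f x) /\
  type_of phi M (g x y).2 = type_of phi M (f y).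
Hypothesis g_swap : forall x y, x != y -> g y x = ((g x y).2, (g x y).1).
Hypothesis g_neq : forall x y, x != y -> uses_eq phi -> (g x y).1 != (g x y).2.
Hypothesis g_witness : forall x p psi, NAllExSpec p (GSym Sy) psi \in phi ->
  (exists w, eval M (env2 (f x) w) psi) ->
  eval M (env2 (f x) (f x)) psi \/
  exists2 y, y != x & eval M (env2 (g x y).1 (g x y).2) psi.

Definition glue_pair x y : D * D := if x == y then (f x, f x) else g x y.

(* Restricting the special symbols other than S to the diagonal preserves their property
   and leaves S x y /\ S y x as the only special guard that can hold off the diagonal. *)
Definition glue_bint R x y : bool :=
  if R == Sy then true
  else if is_special spec R then (x == y) && bint M R (f x) (f x)
  else bint M R (glue_pair x y).1 (glue_pair x y).2.

Definition glue : structure D' := Structure (fun P x => uint M P (f x)) glue_bint.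

Lemma glue_pair_diag x : glue_pair x x = (f x, f x).
Proof. by rewrite /glue_pair eqxx. Qed.

Lemma glue_pair_swap x y : glue_pair y x = ((glue_pair x y).2, (glue_pair x y).1).
Proof.
rewrite /glue_pair eq_sym; case: (eqVneq x y) => [-> // | xy].
by rewrite g_swap // eq_sym.
Qed.

Lemma glue_pair_type x y :
  type_of phi M (glue_pair x y).1 = type_of phi M (f x) /\
  type_of phi M (glue_pair x y).2 = type_of phi M (f y).
Proof. by rewrite /glue_pair; case: (eqVneq x y) => [-> | /g_type]. Qed.

Lemma glue_pair_eq x y :
  uses_eq phi -> ((glue_pair x y).1 == (glue_pair x y).2) = (x == y).
Proof.
rewrite /glue_pair; case: (eqVneq x y) => [_ | xy eq_phi]; first by rewrite eqxx.
exact/negbTE/g_neq.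
Qed.

Lemma glue_bint_diag R x : glue_bint R x x = bint M R (f x) (f x).
Proof.
rewrite /glue_bint glue_pair_diag eqxx; case: eqP => [-> | _]; last by case: is_special.
by rewrite (M_class _ _).1.
Qed.

Lemma glue_bint_nospec R x y : ~~ is_special spec R ->
  glue_bint R x y = bint M R (glue_pair x y).1 (glue_pair x y).2.
Proof.
by move=> /negbTE nsR; rewrite /glue_bint nsR; case: eqP => // ->; rewrite (M_class _ _).1.
Qed.

Lemma type_of_glue x : type_of phi glue x = type_of phi M (f x).
Proof. by congr pair; apply/ffunP => u; rewrite !ffunE //= glue_bint_diag. Qed.

Lemma eval_glue_diag x psi : qfree psi ->
  eval glue (env2 x x) psi <-> eval M (env2 (f x) (f x)) psi.
Proof.
move=> qf; apply: qfree_eval_iff => // - [P [] | R [] [] | [] []] _ //=;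
  by rewrite glue_bint_diag.
Qed.

Lemma eval_atom_glue e a : a \in form_atoms (conj_form phi) -> atom_nospec spec a ->
  eval_atom glue e a <->
  eval_atom M (env2 (glue_pair (e vx) (e vy)).1 (glue_pair (e vx) (e vy)).2) a.
Proof.
move=> a_phi; have [tx ty] := glue_pair_type (e vx) (e vy).
case: a a_phi => [P v | R v w | v w] a_phi /=.
- have P_phi := mem_usyms a_phi.
  by case: v {a_phi}; rewrite /= (type_of_uint tx, type_of_uint ty).
- have R_phi := mem_bsyms a_phi.
  rewrite /atom_nospec /= andbT => nsR; rewrite glue_bint_nospec //.
  case: v w {a_phi} => [] [] /=.
  + by rewrite glue_pair_diag (type_of_bint tx).
  + by [].
  + by rewrite (glue_pair_swap (e vx)).
  + by rewrite glue_pair_diag (type_of_bint ty).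
- move=> _; have eq_phi := uses_eq_atom a_phi.
  case: v w {a_phi} => [] [] //=; apply: (iff_trans (rwP eqP)); apply: iff_sym.
  all: apply: (iff_trans (rwP eqP)).
  + by rewrite glue_pair_eq.
  + by rewrite eq_sym glue_pair_eq // eq_sym.
Qed.

Lemma eval_glue e psi : qfree psi -> form_nospec spec psi ->
  {subset form_atoms psi <= form_atoms (conj_form phi)} ->
  eval glue e psi <->
  eval M (env2 (glue_pair (e vx) (e vy)).1 (glue_pair (e vx) (e vy)).2) psi.
Proof.
move=> qf /allP ns sub; apply: qfree_eval_iff => // a a_psi.
by apply: eval_atom_glue; [apply: sub | apply: ns].
Qed.

Lemma sguard_qfree eta : qfree (sguard_form eta).
Proof. by case: eta. Qed.

Lemma eval_glue_guard x y eta : eval glue (env2 x y) (sguard_form eta) ->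
  eval M (env2 (glue_pair x y).1 (glue_pair x y).2) (sguard_form eta).
Proof.
have [<- | xy] := eqVneq x y.
  by rewrite glue_pair_diag => /eval_glue_diag; apply; apply: sguard_qfree.
have [S_xy S_yx] := M_class (glue_pair x y).1 (glue_pair x y).2.
case: eta => T /=; rewrite /glue_bint; case: eqP => [-> | _]; rewrite ?S_xy ?S_yx //=.
all: case: ifP => _; first by rewrite (negbTE xy) eq_sym (negbTE xy) => -[].
all: by rewrite (glue_pair_swap x y).
Qed.

Lemma glue_witness x p psi : NAllExSpec p (GSym Sy) psi \in phi ->
  (exists w, eval M (env2 (f x) w) psi) ->
  exists y, eval M (env2 (glue_pair x y).1 (glue_pair x y).2) psi.
Proof.
move=> c_phi /(g_witness c_phi) [psi_xx | [y yx psi_xy]].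
  by exists x; rewrite glue_pair_diag.
by exists y; rewrite /glue_pair eq_sym (negbTE yx).
Qed.

Lemma glue_models_all1 F : qfree F -> form_only_x F ->
  models M (FAll vx F) -> models glue (FAll vx F).
Proof.
move=> qf ox /models_all1 MF; apply/models_all1 => x y.
by apply/(eval_only_x glue x y x qf ox)/(eval_glue_diag _ qf).
Qed.

Lemma glue_models_conjunct c : c \in phi_sym Sy phi -> models glue (nf_form c).
Proof.
move=> c_sym; have := c_sym; rewrite mem_filter => /andP [c_in c_phi].
have Mc := (models_conj_form M _).1 M_models c c_sym.
move: c_in c_phi (allP phi_nf c c_phi) (conj_form_atoms c_phi) Mc; case: c {c_sym} => //.
- move=> eta psi _ _ /andP [_ /andP [qf ns]] sub /models_all2 Mc.
  apply/models_all2 => x y /= /eval_glue_guard /Mc psi_xy.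
  by apply/eval_glue => // a a_psi; apply: sub; rewrite /= mem_cat a_psi orbT.
- move=> T psi _ _ /andP [_ /andP [/andP [qf _] ox]] _ Mc.
  by apply: glue_models_all1 Mc; rewrite /form_only_x //= ox.
- move=> q psi _ _ /andP [/andP [/andP [nsq _] _] /andP [qf ns]] sub /models_all2 Mc.
  apply/models_all2 => x y; apply/eval_glue; last exact: Mc.
  + by [].
  + by rewrite /form_nospec /= nsq.
  + exact: sub.
- move=> q psi _ _ /andP [/andP [_ q_x] /andP [/andP [qf _] ox]] _ Mc.
  by apply: glue_models_all1 Mc; rewrite /form_only_x //= q_x.
- move=> p [] // T psi /eqP -> c_phi /and3P [p_x _ /andP [qf ns]] sub /models_all1_imp Mc.
  apply/models_all1_imp => x y p_xy.
  have qp : qfree (FAtom p) by [].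
  have op : form_only_x (FAtom p) by rewrite /form_only_x /= andbT.
  have p_fx := (eval_glue_diag x qp).1 ((eval_only_x glue x y x qp op).1 p_xy).
  have [w [_ psi_w]] := (eval_ex_y _ _ _ _).1 (Mc _ _ p_fx).
  have [z psi_z] := glue_witness c_phi (ex_intro _ w psi_w).
  apply/eval_ex_y; exists z; split; first by rewrite /= /glue_bint eqxx.
  by apply/eval_glue => // a a_psi; apply: sub; rewrite /= !inE a_psi !orbT.
Qed.

Lemma glue_special : special_structure spec glue.
Proof.
move=> R k spec_R; rewrite /= /glue_bint /is_special spec_R.
case: eqP => _; first exact: kind_holds_true.
exact/kind_holds_diag/M_special.
Qed.

Lemma glue_sym_admissible (theta : atype phi -> nat) :
  (forall alpha, #|[pred x | type_of phi M (f x) == alpha]| = theta alpha) ->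
  sym_admissible spec Sy theta.
Proof.
move=> count; exists D', glue; split.
- exact: glue_special.
- by move=> x y; rewrite /= /glue_bint eqxx.
- by move=> alpha; rewrite -count; apply: eq_card => x; rewrite !inE type_of_glue.
- by apply/models_conj_form => c; apply: glue_models_conjunct.
Qed.

End Glue.

(** * Extending a counting type *)

Lemma card_sig_pred (T : finType) (P Q : pred T) :
  #|[pred x : {x : T | P x} | Q (val x)]| = #|[pred a | P a && Q a]|.
Proof.
rewrite -(card_image val_inj); apply: eq_card => a; rewrite !inE.
apply/imageP/idP => [[x Qx ->] | /andP [Pa Qa]]; first by rewrite (valP x).
by exists (exist _ a Pa).
Qed.

Lemma card_pairs_below (T : finType) N (k : T -> nat) (P : pred T) :
  (forall a, k a <= N) ->
  #|[pred p : T * 'I_N | (p.2 < k p.1) && P p.1]| = \sum_(a | P a) k a.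
Proof.
move=> le_kN; rewrite -sum1_card big_mkcond /=.
rewrite -(pair_big predT predT (fun a (i : 'I_N) => if (i < k a) && P a then 1 else 0)) /=.
rewrite [RHS]big_mkcond; apply: eq_bigr => a _.
case: (P a); last by rewrite big1 // => i; rewrite andbF.
rewrite -big_mkcond (eq_bigl (fun i : 'I_N => i < k a)) => [|i]; last by rewrite andbT.
by rewrite -(big_ord_widen _ (fun _ => 1) (le_kN a)) sum1_card card_ord.
Qed.

Section Extension.
Variables (spec : nat -> option skind) (phi : seq nf) (Sy : nat).
Variables (D : finType) (M : structure D) (theta theta' : atype phi -> nat).
Hypothesis phi_nf : normal_form spec phi.
Hypothesis M_special : special_structure spec M.
Hypothesis M_class : S_class M Sy.
Hypothesis M_count : has_counting_type M theta.
Hypothesis M_models : models M (conj_form (phi_sym Sy phi)).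
Hypothesis theta_ext : extends theta theta'.
Hypothesis theta_safe : uses_eq phi -> forall alpha, theta alpha = 1 -> theta' alpha = 1.

Local Notation ty := (type_of phi M).

Definition leader alpha : option D := [pick a | ty a == alpha].

Definition copies (a : D) : nat :=
  if leader (ty a) == Some a then theta' (ty a) - theta (ty a) + 1 else 1.

Let N := (\sum_alpha theta' alpha).+1.

Definition copy_dom := {p : D * 'I_N | p.2 < copies p.1}.

Definition copy_origin (x : copy_dom) : D := (val x).1.

Definition partner (a : D) : option D := [pick b | (b != a) && (ty b == ty a)].

(* Comparing the copy indices makes the choice of orientation symmetric in x and y. *)
Definition copy_pair (x y : copy_dom) : D * D :=
  let a := copy_origin x in
  if a != copy_origin y then (a, copy_origin y) else
  if partner a is Some b then if (val x).2 < (val y).2 then (a, b) else (b, a)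
  else (a, a).

Lemma copies_gt0 a : 0 < copies a.
Proof. by rewrite /copies; case: ifP => _ //; rewrite addn1. Qed.

Lemma copies_le a : copies a <= N.
Proof.
rewrite /copies /N; case: ifP => // _.
have : theta' (ty a) <= \sum_alpha theta' alpha by rewrite (bigD1 (ty a)) //= leq_addr.
lia.
Qed.

Lemma theta_card alpha : theta alpha = #|[pred a | ty a == alpha]|.
Proof. by rewrite M_count. Qed.

Lemma sum_copies alpha : \sum_(a | ty a == alpha) copies a = theta' alpha.
Proof.
have [ext_pos ext0] := theta_ext alpha.
case lead_alpha: (leader alpha) => [a0|]; last first.
  have no_alpha a : (ty a == alpha) = false.
    by move: lead_alpha; rewrite /leader; case: pickP => // /(_ a).
  rewrite big_pred0 // ext0 // theta_card; apply: eq_card0 => a.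
  by rewrite inE no_alpha.
have a0_alpha : ty a0 == alpha.
  by move: lead_alpha; rewrite /leader; case: pickP => // a /[swap] -[->].
have theta_a0 : theta alpha = #|[pred a | (ty a == alpha) && (a != a0)]|.+1.
  rewrite theta_card (cardD1 a0) inE a0_alpha add1n; congr _.+1.
  by apply: eq_card => a; rewrite !inE andbC.
rewrite (bigD1 a0) //= /copies (eqP a0_alpha) lead_alpha eqxx.
rewrite (eq_bigr (fun _ => 1)) => [|a /andP [/eqP -> a_a0]]; last first.
  by rewrite lead_alpha; case: eqP => // -[a0_a]; rewrite a0_a eqxx in a_a0.
rewrite sum1_card -[#|_|]/(#|[pred a | (ty a == alpha) && (a != a0)]|).
by move: ext_pos; rewrite theta_a0 => /(_ (ltn0Sn _)); lia.
Qed.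

Lemma partner_some a : uses_eq phi -> 1 < copies a -> exists2 b, partner a = Some b & b != a.
Proof.
move=> eq_phi; rewrite /copies; case: ifP => // /eqP lead_a more.
have theta_a : 0 < theta (ty a).
  by rewrite theta_card; apply/card_gt0P; exists a; rewrite inE.
have theta_a1 : theta (ty a) != 1 by apply/eqP => /(theta_safe eq_phi) theta'_a; lia.
have : 1 < #|[pred b | ty b == ty a]| by rewrite -theta_card; lia.
rewrite (cardD1 a) inE eqxx ltnS => /card_gt0P [b]; rewrite !inE => b_a.
rewrite /partner; case: pickP => [b' /andP [b'_a _] | /(_ b)]; first by exists b'.
by rewrite b_a.
Qed.

Lemma copy_pair_type x y :
  ty (copy_pair x y).1 = ty (copy_origin x) /\ ty (copy_pair x y).2 = ty (copy_origin y).
Proof.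
rewrite /copy_pair; case: ifP => [// | /negbFE/eqP <-].
rewrite /partner; case: pickP => [b /andP [_ /eqP ty_b] | _] //.
by case: ifP.
Qed.

Lemma copy_index_neq x y :
  x != y -> copy_origin x = copy_origin y -> (val x).2 != (val y).2 :> nat.
Proof.
move=> xy eq_origin; apply: contra xy => /eqP/val_inj eq_index; apply/eqP/val_inj.
move: eq_origin eq_index; rewrite /copy_origin.
by case: (val x); case: (val y) => /= ? ? ? ? -> ->.
Qed.

Lemma copy_pair_swap x y : x != y -> copy_pair y x = ((copy_pair x y).2, (copy_pair x y).1).
Proof.
move=> xy; rewrite /copy_pair eq_sym; case: ifP => [// | /negbFE/eqP eq_origin].
have := copy_index_neq xy eq_origin; rewrite eq_origin.
by case: (partner _) => // b; case: ltngtP => // ->; rewrite eqxx.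
Qed.

Lemma copy_pair_neq x y : x != y -> uses_eq phi -> (copy_pair x y).1 != (copy_pair x y).2.
Proof.
move=> xy eq_phi; rewrite /copy_pair; case: ifP => [// | /negbFE/eqP eq_origin].
have := copy_index_neq xy eq_origin; have := valP x; have := valP y.
rewrite /copy_origin in eq_origin *; rewrite -eq_origin => y_lt x_lt xy_index.
have [|b -> b_a] := partner_some (a := (val x).1) eq_phi.
  move: x_lt y_lt xy_index.
  by case: (copies _) => [|[|c]] //; rewrite !ltnS !leqn0 => /eqP -> /eqP ->.
by case: ifP; rewrite // eq_sym.
Qed.

Lemma copy_witness x psi : (exists w, eval M (env2 (copy_origin x) w) psi) ->
  eval M (env2 (copy_origin x) (copy_origin x)) psi \/
  exists2 y, y != x & eval M (env2 (copy_pair x y).1 (copy_pair x y).2) psi.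
Proof.
case=> w; have [-> | w_x psi_w] := eqVneq w (copy_origin x); first by move=> psi_xx; left.
right; exists (exist _ (w, ord0) (copies_gt0 w) : copy_dom).
  by apply: contra w_x => /eqP <-.
by rewrite /copy_pair eq_sym w_x.
Qed.

Lemma copies_sym_admissible : sym_admissible spec Sy theta'.
Proof.
apply: (glue_sym_admissible phi_nf M_special M_class M_models
          (f := copy_origin) (g := copy_pair)).
- by move=> x y _; apply: copy_pair_type.
- exact: copy_pair_swap.
- exact: copy_pair_neq.
- by move=> x p psi _; apply: copy_witness.
move=> alpha; rewrite -sum_copies -(card_pairs_below _ copies_le).
by rewrite -(card_sig_pred (fun p : D * 'I_N => p.2 < copies p.1)).
Qed.

End Extension.

Lemma sym_admissible_extends spec phi Sy (theta theta' : atype phi -> nat) :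
  normal_form spec phi -> sym_admissible spec Sy theta -> extends theta theta' ->
  (uses_eq phi -> forall alpha, theta alpha = 1 -> theta' alpha = 1) ->
  sym_admissible spec Sy theta'.
Proof.
move=> phi_nf [D [M [M_special M_class M_count M_models]]].
exact: (copies_sym_admissible phi_nf M_special M_class M_count M_models).
Qed.

(** * Cutting a counting type *)

Lemma exists_witness_fun (T I : finType) (P : T -> I -> T -> Prop) :
  exists W : T -> I -> T, forall a i, (exists w, P a i w) -> P a i (W a i).
Proof.
pose Q (r : T * I) w := (exists w', P r.1 r.2 w') -> P r.1 r.2 w.
have [W HW] : exists W : T * I -> T, forall r, Q r (W r).
  apply: (@fin_all_exists _ (fun _ => T) Q) => -[a i].
  by case: (classic (exists w, P a i w)) => [[w Pw] | noW]; [exists w | exists a].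
by exists (fun a i => W (a, i)) => a i; apply: (HW (a, i)).
Qed.

Lemma exists_subset_between (T : finType) (A C : {set T}) n :
  A \subset C -> #|A| <= n -> n <= #|C| ->
  exists B : {set T}, [/\ A \subset B, B \subset C & #|B| = n].
Proof.
move=> AC /subnKC <-; move: (n - #|A|) => k.
elim: k A AC => [|k IH] A AC Cn; first by exists A; rewrite addn0.
have [x x_C x_A] : exists2 x, x \in C & x \notin A.
  have : A \proper C by rewrite properEcard AC; lia.
  by case/properP => _ [x]; exists x.
have [||B [AxB BC]] := IH (x |: A).
- by rewrite subUset sub1set x_C AC.
- by rewrite cardsU1 x_A; lia.
rewrite cardsU1 x_A add1n addSnnS => cardB.
by exists B; split => //; apply: subset_trans AxB; apply: subsetUr.
Qed.

Definition ex_psi (c : nf) : form := if c is NAllExSpec _ _ psi then psi else FTrue.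

Section Cutting.
Variables (spec : nat -> option skind) (phi : seq nf) (Sy : nat).
Variables (D : finType) (M : structure D) (theta : atype phi -> nat) (n : nat).
Hypothesis phi_nf : normal_form spec phi.
Hypothesis M_special : special_structure spec M.
Hypothesis M_class : S_class M Sy.
Hypothesis M_count : has_counting_type M theta.
Hypothesis M_models : models M (conj_form (phi_sym Sy phi)).
Hypothesis n_large : 3 * #|{: atype phi}| * size phi ^ 2 <= n.

Local Notation ty := (type_of phi M).
Local Notation m := (size phi).

Definition slot_psi (i : 'I_m) : form := ex_psi (tnth (in_tuple phi) i).

Variable W : D -> 'I_m -> D.
Hypothesis W_witness : forall a i,
  (exists w, eval M (env2 a w) (slot_psi i)) -> eval M (env2 a (W a i)) (slot_psi i).

Definition rare (a : D) : bool := theta (ty a) < 3 * m.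

Definition rare_witnesses : {set D} :=
  [set W p.1 p.2 | p in [set p : D * 'I_m | rare p.1]].

Lemma atype_card_gt0 : 0 < #|{: atype phi}|.
Proof. by apply/card_gt0P; exists ([ffun _ => false], [ffun _ => false]). Qed.

Lemma three_m_le_n : 3 * m <= n.
Proof.
apply: leq_trans n_large; rewrite -mulnA leq_mul2l /= -[X in X <= _]mul1n.
by apply: leq_mul; [exact: atype_card_gt0 | case: m => // k; rewrite expnS expn1 leq_pmulr].
Qed.

Lemma card_rare_of alpha : #|[pred a | rare a && (ty a == alpha)]| <= 3 * m.
Proof.
case: (ltnP (theta alpha) (3 * m)) => [rare_alpha | common_alpha].
  apply: leq_trans (ltnW rare_alpha); rewrite -M_count.
  by apply/subset_leq_card/subsetP => a; rewrite !inE => /andP [].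
rewrite eq_card0 // => a; rewrite !inE /rare.
by case: eqP => [-> | _]; rewrite ?andbF // ltnNge common_alpha.
Qed.

Lemma card_rare : #|[set a | rare a]| <= #|{: atype phi}| * (3 * m).
Proof.
rewrite cardsE -sum1_card (partition_big ty predT) //= -sum_nat_const.
by apply: leq_sum => alpha _; rewrite sum1_card; apply: card_rare_of.
Qed.

Lemma card_rare_witnesses : #|rare_witnesses| <= n.
Proof.
apply: leq_trans (leq_imset_card _ _) _.
have -> : [set p : D * 'I_m | rare p.1] = setX [set a | rare a] setT.
  by apply/setP => p; rewrite !inE andbT.
rewrite cardsX cardsT card_ord; apply: leq_trans n_large.
apply: leq_trans (leq_mul card_rare (leqnn m)) _.
by rewrite [_ * (3 * m)]mulnCA mulnA -mulnA.
Qed.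

Definition kept_choice beta : {set D} :=
  let C := [set a | ty a == beta] in
  odflt set0 [pick K : {set D} | [&& rare_witnesses :&: C \subset K, K \subset C & #|K| == n]].

Lemma kept_choice_spec beta : n < theta beta ->
  [/\ kept_choice beta \subset [set a | ty a == beta],
      rare_witnesses :&: [set a | ty a == beta] \subset kept_choice beta
    & #|kept_choice beta| = n].
Proof.
move=> many; rewrite /kept_choice; case: pickP => [K /and3P [RW_K K_C /eqP K_card] | no_K] //=.
have [||K [RW_K K_C K_card]] :=
  @exists_subset_between _ (rare_witnesses :&: [set a | ty a == beta]) _ n (subsetIr _ _).
- exact: leq_trans (subset_leq_card (subsetIl _ _)) card_rare_witnesses.
- by rewrite cardsE M_count ltnW.
by move: (no_K K); rewrite RW_K K_C K_card eqxx.
Qed.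

Definition kept : {set D} := [set a | (n < theta (ty a)) ==> (a \in kept_choice (ty a))].

Definition kept_of beta : {set D} := kept :&: [set a | ty a == beta].

Lemma kept_ofP beta a : reflect (a \in kept /\ ty a = beta) (a \in kept_of beta).
Proof. by rewrite !inE; apply: (iffP andP) => -[-> /eqP]. Qed.

Lemma card_kept_of beta : #|kept_of beta| = minn (theta beta) n.
Proof.
case: (ltnP n (theta beta)) => [many | few].
  have [K_sub _ K_card] := kept_choice_spec many.
  rewrite -K_card; apply: eq_card => a; rewrite !inE.
  case: eqP => [-> | ne]; first by rewrite many andbT.
  by rewrite andbF; apply/esym/negP => /(subsetP K_sub); rewrite inE => /eqP.
rewrite -M_count; apply: eq_card => a; rewrite !inE.
by case: eqP => [-> | _]; rewrite ?andbF // ltnNge few.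
Qed.

Lemma rare_kept a : rare a -> a \in kept.
Proof.
rewrite inE /rare => rare_a; apply/implyP => /ltnW /(leq_trans three_m_le_n).
by rewrite leqNgt rare_a.
Qed.

Lemma rare_witness_kept a i : rare a -> W a i \in kept.
Proof.
move=> rare_a; rewrite inE; apply/implyP => /kept_choice_spec [_ RW_sub _].
apply: (subsetP RW_sub); rewrite !inE eqxx andbT.
by apply/imsetP; exists (a, i); rewrite ?inE.
Qed.

Definition part (a : D) : nat := (index a (enum (kept_of (ty a))) %/ m) %% 3.

Definition target (a : D) (i : 'I_m) : D :=
  nth a (enum (kept_of (ty (W a i)))) ((part a).+1 %% 3 * m + i).

Definition redirected (a : D) (i : 'I_m) : bool :=
  [&& ~~ rare a, ~~ rare (W a i) & W a i != a].

Lemma part_lt a : part a < 3.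
Proof. exact: ltn_mod. Qed.

Lemma part_succ_neq k : k < 3 -> k.+1 %% 3 != k.
Proof. by case: k => [|[|[|]]]. Qed.

Lemma target_spec a i : redirected a i ->
  [/\ target a i \in kept_of (ty (W a i)),
      index (target a i) (enum (kept_of (ty (W a i)))) = (part a).+1 %% 3 * m + i
    & part (target a i) = (part a).+1 %% 3].
Proof.
case/and3P => _ common_W _; set beta := ty (W a i); set j := (part a).+1 %% 3.
have j_lt : j < 3 by rewrite ltn_mod.
have i_lt := ltn_ord i.
have idx_lt : j * m + i < size (enum (kept_of beta)).
  rewrite -cardE card_kept_of leq_min; move: common_W (three_m_le_n).
  rewrite /rare -/beta -leqNgt; nia.
have t_in : target a i \in kept_of beta by rewrite -mem_enum; apply: mem_nth.
have t_idx : index (target a i) (enum (kept_of beta)) = j * m + i.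
  by rewrite /target index_uniq // enum_uniq.
split => //; rewrite /part; have [_ ->] := kept_ofP _ _ t_in.
by rewrite t_idx divnMDl ?divn_small // ?addn0 ?modn_small //; lia.
Qed.

Lemma target_inj a i i' :
  redirected a i -> redirected a i' -> target a i = target a i' -> i = i'.
Proof.
move=> red red' eq_t; have [t_in t_idx _] := target_spec red.
have [t_in' t_idx' _] := target_spec red'.
have [_ ty_t] := kept_ofP _ _ t_in; have [_ ty_t'] := kept_ofP _ _ t_in'.
have ty_W : ty (W a i') = ty (W a i) by rewrite -ty_t' -eq_t ty_t.
by move: t_idx'; rewrite ty_W -eq_t t_idx => /eqP; rewrite eqn_add2l => /eqP /val_inj.
Qed.

Definition redirect (a b : D) : option D :=
  if [pick i | redirected a i && (target a i == b)] is Some i then Some (W a i) else None.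

Lemma redirect_some a b w : redirect a b = Some w ->
  exists i, [/\ redirected a i, target a i = b & w = W a i].
Proof. by rewrite /redirect; case: pickP => // i /andP [red /eqP <-] [<-]; exists i. Qed.

Lemma redirect_target a i : redirected a i -> redirect a (target a i) = Some (W a i).
Proof.
move=> red; rewrite /redirect; case: pickP => [i' /andP [red' /eqP eq_t] | /(_ i)].
  by rewrite (target_inj red' red eq_t).
by rewrite red eqxx.
Qed.

Lemma redirect_part a b w : redirect a b = Some w -> part b = (part a).+1 %% 3.
Proof. by case/redirect_some => i [red <- _]; have [] := target_spec red. Qed.

Lemma redirect_asym a b w : redirect a b = Some w -> redirect b a = None.
Proof.
move=> ab; case ba: (redirect b a) => [w'|] //.
have := redirect_part ba; rewrite (redirect_part ab).
by have := part_lt a; case: (part a) => [|[|[|k]]].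
Qed.

Lemma redirect_common a b w : redirect a b = Some w ->
  [/\ ~~ rare a, ~~ rare b, w != a & ty w = ty b].
Proof.
case/redirect_some => i [red <- ->]; have [t_in _ _] := target_spec red.
have [_ ty_t] := kept_ofP _ _ t_in; case/and3P: red => common_a common_W W_a.
by split; rewrite // /rare ty_t.
Qed.

Lemma redirect_rare a b : rare a || rare b -> redirect a b = None.
Proof.
case ab: (redirect a b) => [w|] //; have [common_a common_b _ _] := redirect_common ab.
by rewrite (negbTE common_a) (negbTE common_b).
Qed.

Definition kept_dom := {a : D | a \in kept}.

Definition kept_pair (x y : kept_dom) : D * D :=
  let a := val x in let b := val y in
  if redirect a b is Some w then (a, w)
  else if redirect b a is Some w then (w, b) else (a, b).

Lemma kept_pair_type x y :
  ty (kept_pair x y).1 = ty (val x) /\ ty (kept_pair x y).2 = ty (val y).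
Proof.
rewrite /kept_pair; case ab: (redirect _ _) => [w|] /=.
  by have [_ _ _ ->] := redirect_common ab.
by case ba: (redirect _ _) => [w|] //=; have [_ _ _ ->] := redirect_common ba.
Qed.

Lemma kept_pair_swap x y : kept_pair y x = ((kept_pair x y).2, (kept_pair x y).1).
Proof.
rewrite /kept_pair; case ab: (redirect (val x) (val y)) => [w|] /=.
  by rewrite (redirect_asym ab).
by case: (redirect (val y) (val x)).
Qed.

Lemma kept_pair_neq x y : x != y -> (kept_pair x y).1 != (kept_pair x y).2.
Proof.
move=> xy; rewrite /kept_pair; case ab: (redirect _ _) => [w|] /=.
  by have [_ _ w_a _] := redirect_common ab; rewrite eq_sym.
by case ba: (redirect _ _) => [w|] //=; have [_ _ w_b _] := redirect_common ba.
Qed.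

Lemma kept_pair_witness x i : W (val x) i != val x ->
  exists2 y, y != x & kept_pair x y = (val x, W (val x) i).
Proof.
set a := val x => W_a; case red: (redirected a i).
  have [t_in _ t_part] := target_spec red; have [t_kept _] := kept_ofP _ _ t_in.
  exists (exist _ (target a i) t_kept); last by rewrite /kept_pair /= redirect_target.
  apply/eqP => /(congr1 val) /= t_a.
  by have := part_succ_neq (part_lt a); rewrite -t_part t_a eqxx.
have rare_a_W : rare a || rare (W a i).
  by move: red; rewrite /redirected W_a andbT; case: (rare a); case: (rare (W a i)).
have W_kept : W a i \in kept.
  by case/orP: rare_a_W => [/rare_witness_kept | /rare_kept].
exists (exist _ (W a i) W_kept).
  by apply/eqP => /(congr1 val) /= W_x; rewrite W_x eqxx in W_a.
by rewrite /kept_pair /= !redirect_rare // orbC.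
Qed.

Lemma slot_of_conjunct p psi : NAllExSpec p (GSym Sy) psi \in phi ->
  exists i : 'I_m, slot_psi i = psi.
Proof.
move=> c_phi; have i_lt : index (NAllExSpec p (GSym Sy) psi) phi < m by rewrite index_mem.
by exists (Ordinal i_lt); rewrite /slot_psi (tnth_nth (NAllExSpec p (GSym Sy) psi)) /= nth_index.
Qed.

Lemma kept_witness x p psi : NAllExSpec p (GSym Sy) psi \in phi ->
  (exists w, eval M (env2 (val x) w) psi) ->
  eval M (env2 (val x) (val x)) psi \/
  exists2 y, y != x & eval M (env2 (kept_pair x y).1 (kept_pair x y).2) psi.
Proof.
move=> /slot_of_conjunct [i <-] /W_witness psi_W.
have [W_x | W_x] := eqVneq (W (val x) i) (val x); first by left; rewrite -{2}W_x.
by right; have [y y_x xy] := kept_pair_witness W_x; exists y; rewrite // xy.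
Qed.

Lemma kept_sym_admissible : sym_admissible spec Sy (cutting theta n).
Proof.
apply: (glue_sym_admissible phi_nf M_special M_class M_models (f := val) (g := kept_pair)).
- by move=> x y _; apply: kept_pair_type.
- by move=> x y _; apply: kept_pair_swap.
- by move=> x y xy _; apply: kept_pair_neq.
- exact: kept_witness.
move=> beta; rewrite /cutting -card_kept_of.
rewrite (@card_sig_pred _ (fun a => a \in kept) (fun a => ty a == beta)).
by apply: eq_card => a; rewrite !inE.
Qed.

End Cutting.

Lemma sym_admissible_cutting spec phi Sy (theta : atype phi -> nat) n :
  normal_form spec phi -> 3 * #|{: atype phi}| * size phi ^ 2 <= n ->
  sym_admissible spec Sy theta -> sym_admissible spec Sy (cutting theta n).
Proof.
move=> phi_nf n_large [D [M [M_special M_class M_count M_models]]].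
have [W W_witness] :=
  exists_witness_fun (fun a (i : 'I_(size phi)) w => eval M (env2 a w) (slot_psi i)).
exact: (kept_sym_admissible phi_nf M_special M_class M_count M_models n_large W_witness).
Qed.

Lemma flen_gt0 f : 0 < flen f.
Proof. by case: f => //; case. Qed.

Lemma size_le_phi_len phi : size phi <= phi_len phi.
Proof.
rewrite /phi_len; elim: phi => [|c [|c' cs] IH] //=; first exact: flen_gt0.
by rewrite ltnS (leq_trans IH) // leq_addl.
Qed.

Lemma M_phi_large phi : 3 * #|{: atype phi}| * size phi ^ 2 <= M_phi phi.
Proof.
rewrite /M_phi leq_mul2l; apply/orP; right.
apply: (@leq_trans (phi_len phi ^ 2)); first by rewrite leq_exp2r // size_le_phi_len.
by rewrite leq_pexp2l // flen_gt0.
Qed.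

Unset Implicit Arguments.

Theorem lemma3 (spec : nat -> option skind) (phi : seq nf) (Sy : nat)
  (theta : atype phi -> nat) :
  normal_form spec phi ->
  Sy \in bsyms phi -> is_special spec Sy ->
  counting_type theta -> sym_admissible spec Sy theta ->
  [/\ (~~ uses_eq phi -> forall theta' : atype phi -> nat,
          counting_type theta' -> extends theta theta' ->
          sym_admissible spec Sy theta'),
      (forall theta' : atype phi -> nat,
          counting_type theta' -> safely_extends theta theta' ->
          sym_admissible spec Sy theta')
    & sym_admissible spec Sy (cutting theta (M_phi phi))].
Proof.
move=> phi_nf _ _ _ adm; split.
- move=> no_eq theta' _ ext; apply: sym_admissible_extends phi_nf adm ext _ => eq_phi.
  by rewrite eq_phi in no_eq.
- move=> theta' _ [ext safe].
  exact: sym_admissible_extends phi_nf adm ext (fun _ => safe).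
- exact: sym_admissible_cutting phi_nf (M_phi_large phi) adm.
Qed.
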